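(* There is an absolute constant $c>0$ such that for every integer $d\ge2$ and every $d$-decomposable permutation $X=(x_1,\dots,x_n)$ of $[n]$ (viewed as an access sequence of length $n$), $\mathsf{F}^{1}(X)\le c\,\log d\cdot |X|$.
   Context: $\log(x)=\log_2(\max\{2,x\})$. For a permutation $\sigma=(\sigma(1),\dots,\sigma(n))$, an interval $[a,b]$ with $1\le a\le b\le n$ is a block if $\{\sigma(a),\dots,\sigma(b)\}=\{c,c+1,\dots,e\}$ for some integers $c\le e$. A block partition of $\sigma$ is a partition of the positions $[n]$ into consecutive blocks $[a_1,b_1],\dots,[a_j,b_j]$; $\sigma_i$ is the permutation order-isomorphic to $\sigma$ restricted to $[a_i,b_i]$, and the skeleton $\tilde\sigma$ is the permutation of $[j]$ order-isomorphic to $(\sigma(q_1),\dots,\sigma(q_j))$ for any $q_i\in[a_i,b_i]$; we write $\sigma=\tilde\sigma[\sigma_1,\dots,\sigma_j]$. A permutation is $d$-decomposable if it is $(1)$, or $\sigma=\tilde\sigma[\sigma_1,\dots,\sigma_{j}]$ for some block partition into $2\le j\le d$ blocks with each $\sigma_i$ $d$-decomposable. One-finger cost: for a static BST $T$ on $[n]$ with $d_T(a,b)$ the number of edges between $a$ and $b$, a single finger starting at some node $\ell_1$ moves to each $x_t$ in turn; cost $\sum_{t=1}^n(1+d_T(x_t,x_{t-1}))$ with $x_0=\ell_1$. $\mathsf{F}^1(X)$ is the minimum over $T$ and $\ell_1$. *)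

From Stdlib Require Import Reals.
From mathcomp Require Import all_boot.

Set Implicit Arguments.
Unset Strict Implicit.
Unset Printing Implicit Defensive.

Definition logP (x : R) : R := Rdiv (ln (Rmax (IZR 2) x)) (ln (IZR 2)).

(** A permutation of [n] = {1,...,n}, given as the sequence (sigma(1),...,sigma(n)). *)
Definition is_perm (n : nat) (s : seq nat) : bool := perm_eq s (iota 1 n).

Definition consecutive_values (b : seq nat) : bool :=
  perm_eq b (iota (foldr minn (head 0 b) b) (size b)).

(** the permutation order-isomorphic to a sequence of distinct numbers *)
Definition std (s : seq nat) : seq nat :=
  map (fun x => count (fun y => y <= x) s) s.

(** A block partition of the positions into
    consecutive blocks is a splitting s = b_1 ++ ... ++ b_j into nonempty
    pieces each of whose value sets is an interval; sigma_i = std b_i. *)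
Inductive decomposable (d : nat) : seq nat -> Prop :=
| decomp_one : decomposable d [:: 1]
| decomp_split (bs : seq (seq nat)) :
    2 <= size bs <= d ->
    all (fun b => b != [::]) bs ->
    all consecutive_values bs ->
    (forall b, b \in bs -> decomposable d (std b)) ->
    decomposable d (flatten bs).

Inductive btree : Type :=
| Leaf : btree
| Node : btree -> nat -> btree -> btree.

Fixpoint inorder (t : btree) : seq nat :=
  match t with
  | Leaf => [::]
  | Node l k r => inorder l ++ k :: inorder r
  end.

Definition bst_on (n : nat) (t : btree) : Prop := inorder t = iota 1 n.

Fixpoint root_path (t : btree) (k : nat) : seq nat :=
  match t with
  | Leaf => [::]
  | Node l x r =>
      x :: (if k < x then root_path l k else if x < k then root_path r k else [::])
  end.

Fixpoint common_prefix (s1 s2 : seq nat) : nat :=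
  match s1, s2 with
  | x :: s1', y :: s2' => if x == y then (common_prefix s1' s2').+1 else 0
  | _, _ => 0
  end.

(** d_T(a,b): number of edges on the tree path between nodes a and b *)
Definition tdist (t : btree) (a b : nat) : nat :=
  let pa := root_path t a in
  let pb := root_path t b in
  let p := common_prefix pa pb in
  (size pa - p) + (size pb - p).

Fixpoint finger_cost (t : btree) (cur : nat) (xs : seq nat) : nat :=
  match xs with
  | [::] => 0
  | x :: xs' => 1 + tdist t x cur + finger_cost t x xs'
  end.

(** F^1(X) <= B : since F^1(X) is the minimum over BSTs T on [n] and starting
    nodes l1 of the cost, it is at most B iff some (T, l1) achieves cost <= B. *)
Definition F1_le (n : nat) (X : seq nat) (B : R) : Prop :=
  exists (t : btree) (l1 : nat),
    bst_on n t /\ l1 \in iota 1 n /\ Rle (INR (finger_cost t l1 X)) B.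

From Stdlib Require Import Reals Lra.
From mathcomp Require Import all_boot zify.
From HB Require Import structures.

(** Induct on the decomposition, maintaining a BST rooted at the minimum of the
    permutation on which the closed one-finger tour serving it costs at most
    [3K|X| - 2K].  For [X = sigma~[sigma_1, ..., sigma_j]], each block [b]
    comes with such a tree (shifted to its values), i.e. its minimum [g] with a
    right subtree [R].  Hang the pairs [(g, R)] from a balanced search tree on
    the [j <= d] block minima, so that each [g] and the top of each [R] lie at
    depth [O(log d)].  Serving [X] block by block, a block costs its own tour
    plus [O(log d)]: the walk from the root to [g] and back, and the distortion
    of the legs through [g].  With [K] a suitable multiple of [log d] this
    overhead is at most [K] per block, and there are at least two blocks, so the
    invariant propagates. *)

Set Implicit Arguments.
Unset Strict Implicit.
Unset Printing Implicit Defensive.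

(** * Tree distance as a path metric *)

Lemma common_prefix_sizel p q : common_prefix p q <= size p.
Proof. by elim: p q => [|x p IH] [|y q] //=; case: eqP => // _; apply: IH. Qed.

Lemma common_prefixC p q : common_prefix p q = common_prefix q p.
Proof.
by elim: p q => [|x p IH] [|y q] //=; rewrite eq_sym; case: eqP => // _; rewrite IH.
Qed.

Lemma common_prefix_sizer p q : common_prefix p q <= size q.
Proof. by rewrite common_prefixC common_prefix_sizel. Qed.

Lemma common_prefix_id p : common_prefix p p = size p.
Proof. by elim: p => //= x p ->; rewrite eqxx. Qed.

Lemma common_prefix_min p q r :
  minn (common_prefix p r) (common_prefix r q) <= common_prefix p q.
Proof.
elim: p q r => [|x p IH] [|y q] [|z r] //=; try by rewrite ?minn0 ?min0n.
case: (x =P z) => [xz|]; last by rewrite min0n.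
case: (z =P y) => [zy|]; last by rewrite minn0.
by rewrite xz zy eqxx minnSS ltnS.
Qed.

Lemma common_prefix_catl s p q :
  common_prefix (s ++ p) (s ++ q) = size s + common_prefix p q.
Proof. by elim: s => //= x s ->; rewrite eqxx. Qed.

Lemma common_prefix_map f p q : injective f ->
  common_prefix (map f p) (map f q) = common_prefix p q.
Proof.
move=> f_inj; elim: p q => [|x p IH] [|y q] //=.
by rewrite (inj_eq f_inj); case: eqP => // _; rewrite IH.
Qed.

Definition path_dist (p q : seq nat) :=
  (size p - common_prefix p q) + (size q - common_prefix p q).

Lemma path_distC p q : path_dist p q = path_dist q p.
Proof. by rewrite /path_dist common_prefixC addnC. Qed.

Lemma path_dist_triangle p q r : path_dist p q <= path_dist p r + path_dist r q.
Proof.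
rewrite /path_dist.
have := common_prefix_min p q r.
have := common_prefix_sizel p q; have := common_prefix_sizer p q.
have := common_prefix_sizel p r; have := common_prefix_sizer p r.
have := common_prefix_sizel r q; have := common_prefix_sizer r q.
lia.
Qed.

Lemma path_dist_catl s p q : path_dist (s ++ p) (s ++ q) = path_dist p q.
Proof.
rewrite /path_dist common_prefix_catl !size_cat.
have := common_prefix_sizel p q; have := common_prefix_sizer p q; lia.
Qed.

Lemma tdistE t a b : tdist t a b = path_dist (root_path t a) (root_path t b).
Proof. by []. Qed.

Lemma tdistC t a b : tdist t a b = tdist t b a.
Proof. by rewrite !tdistE path_distC. Qed.

Lemma tdist_triangle t a b c : tdist t a b <= tdist t a c + tdist t c b.
Proof. by rewrite !tdistE path_dist_triangle. Qed.

Lemma tdistxx t a : tdist t a a = 0.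
Proof. by rewrite tdistE /path_dist common_prefix_id subnn. Qed.

Lemma tdist_le_depth t a b :
  tdist t a b <= size (root_path t a) + size (root_path t b).
Proof. rewrite tdistE /path_dist; lia. Qed.

Lemma tdist_root l k r x :
  tdist (Node l k r) k x = (size (root_path (Node l k r) x)).-1.
Proof. by rewrite tdistE /path_dist /= ltnn eqxx /=; lia. Qed.

(** * Closed tours *)

Definition tour t c xs := finger_cost t c xs + tdist t (last c xs) c.

Lemma finger_cost_cat t c s1 s2 :
  finger_cost t c (s1 ++ s2) = finger_cost t c s1 + finger_cost t (last c s1) s2.
Proof. by elim: s1 c => //= x s1 IH c; rewrite IH addnA. Qed.

Lemma finger_cost_restart t cur c xs :
  finger_cost t cur xs <= tdist t cur c + finger_cost t c xs.
Proof.
case: xs => [|x xs] //=.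
have := tdist_triangle t x cur c; rewrite (tdistC t c cur) (tdistC t x c); lia.
Qed.

Lemma finger_cost_return t y c xs :
  finger_cost t y xs + tdist t (last y xs) c <= tdist t y c + tour t c xs.
Proof.
rewrite /tour; case: xs => [|x xs] /=; first by rewrite tdistxx; lia.
have := tdist_triangle t x y c; rewrite (tdistC t c y); lia.
Qed.

Lemma tour_cat_le t c g s1 s2 :
  tour t c (s1 ++ s2) <= tour t g s1 + 2 * tdist t g c + tour t c s2.
Proof.
rewrite {1}/tour finger_cost_cat last_cat.
have := finger_cost_return t (last c s1) c s2.
rewrite /tour; case: s1 => [|x s1] /=; first by rewrite tdistxx; lia.
have := finger_cost_restart t c g (x :: s1); rewrite /=.
have := tdist_triangle t (last x s1) c g; rewrite (tdistC t c g); lia.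
Qed.

Lemma tour_flatten (T : Type) t c (start : T -> nat) (block : T -> seq nat) (s : seq T) :
  tour t c (flatten (map block s)) <=
  \sum_(p <- s) (tour t (start p) (block p) + 2 * tdist t (start p) c).
Proof.
elim: s => [|p s IH]; first by rewrite big_nil /tour /= tdistxx.
have := tour_cat_le t c (start p) (block p) (flatten (map block s)).
by rewrite big_cons /=; lia.
Qed.

Lemma finger_cost_compare t1 t2 g E (S : seq nat) :
  {in S &, forall x y, tdist t1 x y <= tdist t2 x y + E * ((x == g) + (y == g))} ->
  forall cur xs, cur \in S -> all (mem S) xs ->
  finger_cost t1 cur xs <= finger_cost t2 cur xs + E * ((cur == g) + 2 * count_mem g xs).
Proof.
move=> dist_le cur xs; elim: xs cur => [|x xs IH] cur //= Scur /andP [Sx Sxs].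
have := dist_le x cur Sx Scur; have := IH x Sx Sxs.
by case: (x == g); case: (cur == g) => /=; nia.
Qed.

Lemma tour_compare t1 t2 g E (S : seq nat) xs :
  {in S &, forall x y, tdist t1 x y <= tdist t2 x y + E * ((x == g) + (y == g))} ->
  g \in S -> all (mem S) xs -> count_mem g xs <= 1 ->
  tour t1 g xs <= tour t2 g xs + 5 * E.
Proof.
move=> dist_le Sg Sxs g_once.
have := finger_cost_compare dist_le Sg Sxs; rewrite eqxx.
have : E * (true + 2 * count_mem g xs) <= 3 * E by rewrite mulnC leq_mul2r; lia.
have Slast : last g xs \in S.
  by have := mem_last g xs; rewrite inE => /predU1P [-> // | /(allP Sxs)].
have := dist_le _ _ Slast Sg; rewrite /tour eqxx.
case: (last g xs == g) => /=; lia.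
Qed.

(** * Hosting a block tree inside a larger tree *)

Definition subtree_within (t S : btree) (e : nat) :=
  exists2 Q : seq nat, size Q <= e &
    {in inorder S, forall x, root_path t x = Q ++ root_path S x}.

Lemma root_path_nodeL L k R x :
  pairwise ltn (inorder (Node L k R)) -> x \in inorder L ->
  root_path (Node L k R) x = k :: root_path L x.
Proof.
rewrite /= pairwise_cat => /and3P [/allrelP lt_k _ _] Lx.
have xk : x < k := lt_k x k Lx (mem_head k _).
by rewrite /= xk.
Qed.

Lemma root_path_nodeR L k R x :
  pairwise ltn (inorder (Node L k R)) -> x \in inorder R ->
  root_path (Node L k R) x = k :: root_path R x.
Proof.
rewrite /= pairwise_cat pairwise_cons => /and3P [_ _ /andP [/allP gt_k _]] Rx.
have kx : k < x := gt_k x Rx.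
by rewrite /= ltnNge (ltnW kx) kx.
Qed.

(* Only legs ending at [g] are distorted: in [t] they may climb from [g] to the
   root and down through the at most [e] keys above [R]. *)
Lemma tdist_hosted t g R e :
  pairwise ltn (g :: inorder R) -> size (root_path t g) <= e -> subtree_within t R e ->
  {in g :: inorder R &, forall x y,
    tdist t x y <= tdist (Node Leaf g R) x y + 2 * e * ((x == g) + (y == g))}.
Proof.
move=> sortedR depth_g [Q sizeQ path_t].
have g_min : {in inorder R, forall x, g < x}.
  by move: sortedR; rewrite pairwise_cons => /andP [/allP].
have path_g x : x \in inorder R -> root_path (Node Leaf g R) x = [:: g] ++ root_path R x.
  by move=> Rx; rewrite root_path_nodeR.
have neq_g x : x \in inorder R -> (x == g) = false.
  by move=> Rx; apply/gtn_eqF/g_min.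
have from_g y : y \in inorder R -> tdist t g y <= tdist (Node Leaf g R) g y + 2 * e.
  move=> Ry; have := tdist_le_depth t g y.
  by rewrite tdist_root path_g // (path_t y) // !size_cat /=; lia.
move=> x y; rewrite !inE => /predU1P [-> | Rx] /predU1P [-> | Ry].
- by rewrite tdistxx.
- by rewrite eqxx neq_g //; have := from_g y Ry; lia.
- by rewrite eqxx neq_g // tdistC (tdistC _ x); have := from_g x Rx; lia.
- by rewrite !tdistE !path_t // !path_g // !path_dist_catl; lia.
Qed.

Lemma tour_hosted t g R e xs :
  pairwise ltn (g :: inorder R) -> size (root_path t g) <= e -> subtree_within t R e ->
  perm_eq xs (g :: inorder R) -> tour t g xs <= tour (Node Leaf g R) g xs + 10 * e.
Proof.
move=> sortedR depth_g within perm_xs.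
have all_xs : all (mem (g :: inorder R)) xs.
  by apply/allP => x; rewrite (perm_mem perm_xs).
have once_g : count_mem g xs <= 1.
  rewrite (permP perm_xs) count_uniq_mem ?leq_b1 //.
  exact: pairwise_uniq ltnn sortedR.
have := tour_compare (tdist_hosted sortedR depth_g within) (mem_head _ _) all_xs once_g.
lia.
Qed.

Fixpoint shift (s : nat) (t : btree) : btree :=
  match t with
  | Leaf => Leaf
  | Node l k r => Node (shift s l) (s + k) (shift s r)
  end.

Lemma inorder_shift s t : inorder (shift s t) = map (addn s) (inorder t).
Proof. by elim: t => //= l -> k r ->; rewrite map_cat. Qed.

Lemma root_path_shift s t k : root_path (shift s t) (s + k) = map (addn s) (root_path t k).
Proof.
elim: t => //= l IHl x r IHr; rewrite !ltn_add2l.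
by case: ifP => _; [rewrite IHl | case: ifP => _; [rewrite IHr|]].
Qed.

Lemma tdist_shift s t a b : tdist (shift s t) (s + a) (s + b) = tdist t a b.
Proof.
by rewrite !tdistE !root_path_shift /path_dist !size_map common_prefix_map //; apply: addnI.
Qed.

Lemma tour_shift s t c xs : tour (shift s t) (s + c) (map (addn s) xs) = tour t c xs.
Proof.
rewrite /tour last_map tdist_shift; congr (_ + _).
by elim: xs c => //= x xs IH c; rewrite tdist_shift IH.
Qed.

(** * A balanced tree of blocks *)

Fixpoint btree_eq (a b : btree) : bool :=
  match a, b with
  | Leaf, Leaf => true
  | Node l k r, Node l' k' r' => [&& btree_eq l l', k == k' & btree_eq r r']
  | _, _ => false
  end.

Lemma btree_eqP : Equality.axiom btree_eq.
Proof.
elim=> [|l IHl k r IHr] [|l' k' r'] /=; try by constructor.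
apply: (iffP idP) => [/and3P [/IHl -> /eqP -> /IHr ->] // | [<- <- <-]].
by rewrite eqxx; apply/andP; split; [apply/IHl | apply/IHr].
Qed.

HB.instance Definition _ := hasDecEq.Build btree btree_eqP.

Lemma subtree_within_id t e : subtree_within t t e.
Proof. by exists [::]. Qed.

Lemma subtree_within_nodeL L k R S e :
  pairwise ltn (inorder (Node L k R)) -> {subset inorder S <= inorder L} ->
  subtree_within L S e -> subtree_within (Node L k R) S e.+1.
Proof.
move=> sorted_t sub_S [Q sizeQ path_L]; exists (k :: Q) => // x Sx.
by rewrite root_path_nodeL ?path_L ?sub_S.
Qed.

Lemma subtree_within_nodeR L k R S e :
  pairwise ltn (inorder (Node L k R)) -> {subset inorder S <= inorder R} ->
  subtree_within R S e -> subtree_within (Node L k R) S e.+1.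
Proof.
move=> sorted_t sub_S [Q sizeQ path_R]; exists (k :: Q) => // x Sx.
by rewrite root_path_nodeR ?path_R ?sub_S.
Qed.

Definition keyed_inorder (ps : seq (nat * btree)) :=
  flatten [seq p.1 :: inorder p.2 | p <- ps].

Lemma keyed_inorder_cat ps qs :
  keyed_inorder (ps ++ qs) = keyed_inorder ps ++ keyed_inorder qs.
Proof. by rewrite /keyed_inorder map_cat flatten_cat. Qed.

Lemma mem_keyed_inorder ps p :
  p \in ps -> {subset p.1 :: inorder p.2 <= keyed_inorder ps}.
Proof. by move=> ps_p x px; apply/flattenP; exists (p.1 :: inorder p.2); rewrite ?map_f. Qed.

Definition placed t e (p : nat * btree) :=
  size (root_path t p.1) <= e /\ subtree_within t p.2 e.

Lemma placed_nodeL L k R e p :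
  pairwise ltn (inorder (Node L k R)) -> {subset p.1 :: inorder p.2 <= inorder L} ->
  placed L e p -> placed (Node L k R) e.+1 p.
Proof.
move=> sorted_t sub_p [depth_p within_p]; split.
  by rewrite root_path_nodeL ?sub_p ?mem_head.
by apply: subtree_within_nodeL within_p => // x px; rewrite sub_p ?inE ?px ?orbT.
Qed.

Lemma placed_nodeR L k R e p :
  pairwise ltn (inorder (Node L k R)) -> {subset p.1 :: inorder p.2 <= inorder R} ->
  placed R e p -> placed (Node L k R) e.+1 p.
Proof.
move=> sorted_t sub_p [depth_p within_p]; split.
  by rewrite root_path_nodeR ?sub_p ?mem_head.
by apply: subtree_within_nodeR within_p => // x px; rewrite sub_p ?inE ?px ?orbT.
Qed.

(* A balanced search tree on the keys [k] of [ps], each followed in in-order by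
   the subtree [T] it carries; [T0] comes first. *)
Fixpoint balance (fuel : nat) (T0 : btree) (ps : seq (nat * btree)) : btree :=
  match fuel, ps with
  | fuel'.+1, _ :: _ =>
      let h := (size ps)./2 in
      let p := nth (0, Leaf) ps h in
      Node (balance fuel' T0 (take h ps)) p.1 (balance fuel' p.2 (drop h.+1 ps))
  | _, _ => T0
  end.

Lemma balance_node fuel T0 ps (h := (size ps)./2) (p := nth (0, Leaf) ps h) :
  ps != [::] ->
  balance fuel.+1 T0 ps =
  Node (balance fuel T0 (take h ps)) p.1 (balance fuel p.2 (drop h.+1 ps)).
Proof. by case: ps @h @p. Qed.

Lemma split_half (ps : seq (nat * btree)) (h := (size ps)./2) : ps != [::] ->
  [/\ ps = take h ps ++ nth (0, Leaf) ps h :: drop h.+1 ps,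
      size (take h ps) <= h, size (drop h.+1 ps) <= h & h < size ps].
Proof.
case: ps @h => // p ps h _; have lt_h : h < size (p :: ps) by rewrite /h -divn2 /=; lia.
rewrite -drop_nth ?cat_take_drop // size_take size_drop lt_h /h -divn2; split=> //; lia.
Qed.

Lemma inorder_balance fuel T0 ps : size ps <= fuel ->
  inorder (balance fuel T0 ps) = inorder T0 ++ keyed_inorder ps.
Proof.
elim: fuel T0 ps => [|fuel IH] T0 ps; first by rewrite leqn0 => /nilP ->; rewrite cats0.
have [-> | ps_nil ps_fuel] := altP (ps =P [::]); first by rewrite cats0.
have [ps_split take_le drop_le h_lt] := split_half ps_nil.
rewrite balance_node //= !IH; try lia.
by rewrite [in RHS]ps_split keyed_inorder_cat -!catA.
Qed.

Lemma balance_placement fuel e T0 ps : size ps <= fuel -> size ps < 2 ^ e ->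
  pairwise ltn (inorder (balance fuel T0 ps)) ->
  subtree_within (balance fuel T0 ps) T0 e /\
  {in ps, forall p, placed (balance fuel T0 ps) e p}.
Proof.
elim: fuel e T0 ps => [|fuel IH] e T0 ps.
  by rewrite leqn0 => /nilP -> _ _; split; [apply: subtree_within_id|].
have [-> | ps_nil ps_fuel] := altP (ps =P [::]); first by split; [apply: subtree_within_id|].
have [ps_split take_le drop_le h_lt] := split_half ps_nil.
case: e => [|e ps_e]; first by rewrite expn0 ltnS leqn0 size_eq0 (negbTE ps_nil).
have half_e : (size ps)./2 < 2 ^ e by rewrite ltn_half_double -mul2n -expnS.
rewrite balance_node //; set L := balance _ _ _; set p := nth _ _ _; set R := balance _ _ _.
move=> sorted_t.
have sorted_L : pairwise ltn (inorder L).
  by move: sorted_t; rewrite /= pairwise_cat => /and3P [].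
have sorted_R : pairwise ltn (inorder R).
  by move: sorted_t; rewrite /= pairwise_cat pairwise_cons => /and3P [_ _ /andP []].
have fuel_L : size (take (size ps)./2 ps) <= fuel by lia.
have fuel_R : size (drop (size ps)./2.+1 ps) <= fuel by lia.
have [L_T0 L_ps] := IH e T0 _ fuel_L (leq_ltn_trans take_le half_e) sorted_L.
have [R_p R_ps] := IH e p.2 _ fuel_R (leq_ltn_trans drop_le half_e) sorted_R.
have inL := inorder_balance T0 fuel_L; have inR := inorder_balance p.2 fuel_R.
split.
  by apply: subtree_within_nodeL L_T0 => // x; rewrite inL mem_cat => ->.
move=> q; rewrite {1}ps_split mem_cat inE => /or3P [q_L | /eqP -> | q_R].
- apply: placed_nodeL (L_ps q q_L) => // x /(mem_keyed_inorder q_L).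
  by rewrite inL mem_cat orbC => ->.
- split; first by rewrite /= ltnn.
  by apply: subtree_within_nodeR R_p => // x; rewrite inR mem_cat => ->.
- apply: placed_nodeR (R_ps q q_R) => // x /(mem_keyed_inorder q_R).
  by rewrite inR mem_cat orbC => ->.
Qed.

Definition assemble (ps : seq (nat * btree)) : btree :=
  if ps is p :: rest then Node Leaf p.1 (balance (size rest) p.2 rest) else Leaf.

Lemma inorder_assemble ps : inorder (assemble ps) = keyed_inorder ps.
Proof. by case: ps => //= p rest; rewrite inorder_balance. Qed.

Lemma assemble_placement e ps : size ps <= 2 ^ e -> pairwise ltn (keyed_inorder ps) ->
  {in ps, forall p, placed (assemble ps) e.+1 p}.
Proof.
rewrite -inorder_assemble; case: ps => [|p rest] //= ps_e sorted_t.
have sorted_B : pairwise ltn (inorder (balance (size rest) p.2 rest)).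
  by case/andP: sorted_t.
have [B_p B_rest] := balance_placement (leqnn _) ps_e sorted_B.
have inB := inorder_balance p.2 (leqnn (size rest)).
move=> q; rewrite inE => /predU1P [-> | q_rest].
  split; first by rewrite /= ltnn.
  by apply: subtree_within_nodeR B_p => // x; rewrite inB mem_cat => ->.
apply: placed_nodeR (B_rest q q_rest) => // x /(mem_keyed_inorder q_rest).
by rewrite inB mem_cat orbC => ->.
Qed.

(** * Blocks of a decomposition *)

(* [consecutive_values b] is by definition [perm_eq b (iota (low b) (size b))]. *)
Definition low (b : seq nat) : nat := foldr minn (head 0 b) b.

Lemma count_leq_iota g m x : count (fun y => y <= x) (iota g m) = minn m (x.+1 - g).
Proof. by elim: m g => [|m IH] g /=; rewrite ?min0n // IH; case: (leqP g x); lia. Qed.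

Lemma std_interval b g m : perm_eq b (iota g m) -> 0 < g ->
  map (addn g.-1) (std b) = b /\ perm_eq (std b) (iota 1 m).
Proof.
move=> perm_b g_gt0.
have std_shift : map (addn g.-1) (std b) = b.
  rewrite /std -map_comp -[RHS]map_id; apply/eq_in_map => x b_x /=.
  move: b_x; rewrite (permP perm_b) count_leq_iota (perm_mem perm_b) mem_iota; lia.
split=> //; apply: (@perm_map_inj _ _ (addn g.-1)); first exact: addnI.
by rewrite std_shift -iotaDl addn1 prednK.
Qed.

Lemma perm_flatten_in (A T : eqType) (f g : A -> seq T) (s : seq A) :
  {in s, forall a, perm_eq (f a) (g a)} -> perm_eq (flatten (map f s)) (flatten (map g s)).
Proof.
elim: s => //= a s IH fg; apply: perm_cat; first by apply: fg; rewrite mem_head.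
by apply: IH => x s_x; apply: fg; rewrite inE s_x orbT.
Qed.

Lemma pairwise_ltn_iota a n : pairwise ltn (iota a n).
Proof. by rewrite -sorted_pairwise ?iota_ltn_sorted //; apply: ltn_trans. Qed.

Lemma sorted_intervals_pairwise (L : seq (nat * nat)) :
  sorted (relpre fst leq) L -> all (fun u => 0 < u.2) L ->
  uniq (flatten [seq iota u.1 u.2 | u <- L]) ->
  pairwise ltn (flatten [seq iota u.1 u.2 | u <- L]).
Proof.
elim: L => [|[a m] L IH] //= sorted_L /andP [m_gt0 pos_L].
rewrite cat_uniq pairwise_cat => /and3P [_ disjoint_L uniq_L].
apply/and3P; split; last by apply: IH => //; apply: path_sorted sorted_L.
  2: exact: pairwise_ltn_iota.
apply/allrelP => x y; rewrite mem_iota => /andP [a_x x_am] /flattenP [_ /mapP [[b k] L_bk ->]].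
have a_b : a <= b.
  have fst_trans : transitive (relpre (@fst nat nat) leq).
    by move=> v u w; apply: leq_trans.
  exact: (allP (order_path_min fst_trans sorted_L) _ L_bk).
have k_gt0 : 0 < k := allP pos_L _ L_bk.
have b_notin : b \notin iota a m.
  apply: contra disjoint_L => b_in; apply/hasP; exists b => //.
  apply/flattenP; exists (iota b k); first by apply/mapP; exists (b, k).
  by rewrite mem_iota leqnn /=; lia.
by move: b_notin; rewrite mem_iota a_b /= -leqNgt mem_iota; lia.
Qed.

Lemma sorted_intervals_eq (L : seq (nat * nat)) a n :
  sorted (relpre fst leq) L -> all (fun u => 0 < u.2) L ->
  perm_eq (flatten [seq iota u.1 u.2 | u <- L]) (iota a n) ->
  flatten [seq iota u.1 u.2 | u <- L] = iota a n.
Proof.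
move=> sorted_L pos_L perm_L.
apply: (irr_sorted_eq ltn_trans ltnn); last exact: perm_mem.
  rewrite sorted_pairwise; last exact: ltn_trans.
  by apply: sorted_intervals_pairwise; rewrite ?(perm_uniq perm_L) ?iota_uniq.
exact: iota_ltn_sorted.
Qed.

Lemma seq_choice (A B : eqType) (P : A -> B -> Prop) (s : seq A) :
  {in s, forall a, exists b, P a b} ->
  exists ps : seq (A * B), map fst ps = s /\ {in ps, forall p, P p.1 p.2}.
Proof.
elim: s => [|a s IH] exP; first by exists [::].
have [b Pab] := exP a (mem_head a s).
have [|ps [<- Pps]] := IH; first by move=> x s_x; apply: exP; rewrite inE s_x orbT.
by exists ((a, b) :: ps); split=> // p; rewrite inE => /predU1P [-> | /Pps].
Qed.

(** * The inductive invariant *)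

Definition within_budget K g (b : seq nat) (R : btree) :=
  inorder (Node Leaf g R) = iota g (size b) /\
  tour (Node Leaf g R) g b + 2 * K <= 3 * K * size b.

Definition interval_block K (b : seq nat) (R : btree) :=
  perm_eq b (iota (low b) (size b)) /\ within_budget K (low b) b R.

Lemma within_budget_size_gt0 K g b R : within_budget K g b R -> 0 < size b.
Proof. by case: b => // -[]. Qed.

Lemma within_budget_singleton K : 0 < K -> within_budget K 1 [:: 1] Leaf.
Proof. by move=> K_gt0; split=> //; rewrite /tour /= !tdistxx; lia. Qed.

Lemma within_budget_shift K g b R : perm_eq b (iota g (size b)) -> 0 < g ->
  within_budget K 1 (std b) R -> within_budget K g b (shift g.-1 R).
Proof.
move=> perm_b g_gt0 [inorder_R tour_R]; have [std_b _] := std_interval perm_b g_gt0.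
have shift_root : shift g.-1 (Node Leaf 1 R) = Node Leaf g (shift g.-1 R).
  by rewrite /= addn1 prednK.
rewrite size_map in inorder_R tour_R; rewrite /within_budget -shift_root; split.
  by rewrite inorder_shift inorder_R -iotaDl addn1 prednK.
by have := tour_shift g.-1 (Node Leaf 1 R) 1 (std b); rewrite std_b addn1 prednK // => ->.
Qed.

Lemma hosted_block_cost K e t c g b R :
  12 * e <= K -> perm_eq b (iota g (size b)) -> within_budget K g b R ->
  placed t e (g, R) -> tdist t g c <= e ->
  tour t g b + 2 * tdist t g c + K <= 3 * K * size b.
Proof.
move=> K_e perm_b [inorder_R tour_R] [depth_g within_R] dist_c.
have sorted_R : pairwise ltn (g :: inorder R).
  by rewrite -[g :: _]/(inorder (Node Leaf g R)) inorder_R pairwise_ltn_iota.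
have := tour_hosted sorted_R depth_g within_R.
rewrite -[g :: _]/(inorder (Node Leaf g R)) inorder_R => /(_ b perm_b) hosted.
apply: leq_trans tour_R; lia.
Qed.

Lemma sum_budget (T : eqType) (s : seq T) (F w : T -> nat) K :
  {in s, forall x, F x + K <= 3 * K * w x} ->
  \sum_(x <- s) F x + K * size s <= 3 * K * \sum_(x <- s) w x.
Proof.
elim: s => [|x s IH] le_s; first by rewrite !big_nil /= !muln0.
have le_tail : {in s, forall y, F y + K <= 3 * K * w y}.
  by move=> y s_y; apply: le_s; rewrite inE s_y orbT.
have := le_s x (mem_head x s); have := IH le_tail.
by rewrite !big_cons mulnDr /=; lia.
Qed.

Lemma size_flatten_sum (T : Type) (ps : seq (seq nat * T)) :
  size (flatten (map fst ps)) = \sum_(p <- ps) size p.1.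
Proof. by rewrite size_flatten sumnE /shape -map_comp big_map. Qed.

Definition block_keys (ps : seq (seq nat * btree)) : seq (nat * btree) :=
  [seq (low p.1, p.2) | p <- sort (relpre (fun p => low p.1) leq) ps].

Lemma keyed_inorder_blocks K (ps : seq (seq nat * btree)) n :
  perm_eq (flatten (map fst ps)) (iota 1 n) ->
  {in ps, forall p, interval_block K p.1 p.2} ->
  keyed_inorder (block_keys ps) = iota 1 n.
Proof.
move=> perm_X blocks; rewrite /block_keys; set qs := sort _ ps.
have perm_qs : perm_eq qs ps by rewrite perm_sort.
have -> : keyed_inorder [seq (low p.1, p.2) | p <- qs] =
          flatten [seq iota u.1 u.2 | u <- [seq (low p.1, size p.1) | p <- qs]].
  rewrite /keyed_inorder -!map_comp; congr flatten; apply/eq_in_map => p.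
  by rewrite (perm_mem perm_qs) => /blocks [_ []].
apply: sorted_intervals_eq.
- by rewrite sorted_map; apply: sort_sorted => p q; apply: leq_total.
- apply/allP => _ /mapP [p qs_p ->]; rewrite (perm_mem perm_qs) in qs_p.
  by have [_ /within_budget_size_gt0] := blocks p qs_p.
- apply: perm_trans perm_X; rewrite -map_comp.
  apply: (@perm_trans _ (flatten (map fst qs))); last exact/perm_flatten/perm_map.
  by apply: perm_flatten_in => p; rewrite (perm_mem perm_qs) perm_sym => /blocks [].
Qed.

Lemma within_budget_flatten K e (ps : seq (seq nat * btree)) n :
  12 * e.+1 <= K -> 2 <= size ps <= 2 ^ e ->
  perm_eq (flatten (map fst ps)) (iota 1 n) ->
  {in ps, forall p, interval_block K p.1 p.2} ->
  exists R, within_budget K 1 (flatten (map fst ps)) R.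
Proof.
move=> K_e /andP [two_ps ps_e] perm_X blocks.
have inorder_t := keyed_inorder_blocks perm_X blocks.
have size_ks : size (block_keys ps) = size ps by rewrite size_map size_sort.
have [B t_eq] : exists B, assemble (block_keys ps) = Node Leaf 1 B.
  move: inorder_t; rewrite -inorder_assemble.
  case: (block_keys ps) size_ks => [|k rest] /=; first by move=> ps0; rewrite -ps0 in two_ps.
  by case: n {perm_X} => // n _ [<- _]; exists (balance (size rest) k.2 rest).
exists B; split.
  by rewrite -t_eq inorder_assemble inorder_t (perm_size perm_X) size_iota.
have sorted_ks : pairwise ltn (keyed_inorder (block_keys ps)).
  by rewrite inorder_t pairwise_ltn_iota.
have := assemble_placement (leq_trans (eq_leq size_ks) ps_e) sorted_ks.
rewrite t_eq => placed_ks.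
have block_cost : {in ps, forall p, tour (Node Leaf 1 B) (low p.1) p.1 +
    2 * tdist (Node Leaf 1 B) (low p.1) 1 + K <= 3 * K * size p.1}.
  move=> p ps_p; have [perm_p budget_p] := blocks p ps_p.
  have placed_p : placed (Node Leaf 1 B) e.+1 (low p.1, p.2).
    by apply: placed_ks; rewrite map_f // mem_sort.
  have dist_root : tdist (Node Leaf 1 B) (low p.1) 1 <= e.+1.
    by rewrite tdistC tdist_root; case: placed_p => /= depth_p _; lia.
  by apply: hosted_block_cost K_e perm_p budget_p placed_p dist_root.
have two_K : 2 * K <= K * size ps by rewrite mulnC leq_mul2l two_ps orbT.
rewrite size_flatten_sum; apply: leq_trans (sum_budget block_cost).
exact: leq_add (tour_flatten _ _ (fun p => low p.1) fst ps) two_K.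
Qed.

(* [(trunc_log 2 d).+2] bounds the depth of every block root; a block pays [10]
   times it for distortion (5 distorted legs) and [2] times it for the walk
   between the global root and its own. *)
Definition tour_const (d : nat) := 12 * (trunc_log 2 d).+2.

Lemma decomposable_within_budget d X n : decomposable d X -> perm_eq X (iota 1 n) ->
  exists R, within_budget (tour_const d) 1 X R.
Proof.
move=> dec_X; elim: dec_X n => [|bs size_bs nonempty consec _ IH] n perm_X.
  by exists Leaf; apply: within_budget_singleton.
have blocks b : b \in bs -> exists R, interval_block (tour_const d) b R.
  move=> bs_b; have perm_b : perm_eq b (iota (low b) (size b)) := allP consec b bs_b.
  have low_gt0 : 0 < low b.
    have b_low : low b \in b.
      have := allP nonempty b bs_b; rewrite -size_eq0 (perm_mem perm_b) mem_iota; lia.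
    have : low b \in flatten bs by apply/flattenP; exists b.
    by rewrite (perm_mem perm_X) mem_iota => /andP [].
  have [_ perm_std] := std_interval perm_b low_gt0.
  have [R budget_R] := IH b bs_b (size b) perm_std.
  by exists (shift (low b).-1 R); split; last exact: within_budget_shift.
have [ps [ps_bs ps_blocks]] := seq_choice blocks.
have size_ps : size ps = size bs by rewrite -ps_bs size_map.
rewrite -ps_bs in perm_X *.
apply: (within_budget_flatten (e := (trunc_log 2 d).+1)) perm_X ps_blocks => //.
rewrite size_ps; case/andP: size_bs => -> bs_d /=.
exact/ltnW/(leq_ltn_trans bs_d)/trunc_log_ltn.
Qed.

(** * From [trunc_log] to [logP] *)

Lemma ln_le_ln x y : Rlt 0 x -> Rle x y -> Rle (ln x) (ln y).
Proof.
move=> x_gt0 /Rle_lt_or_eq_dec [x_lt_y | ->]; last exact: Rle_refl.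
exact/Rlt_le/ln_increasing.
Qed.

Lemma INR_expn m n : INR (m ^ n) = pow (INR m) n.
Proof. by elim: n => //= n IH; rewrite expnS mult_INR IH. Qed.

Lemma logP_ge1 x : Rle 1 (logP x).
Proof.
have ln2_gt0 : Rlt 0 (ln 2) by have := ln_lt_2; lra.
rewrite /logP; apply: (Rmult_le_reg_r (ln 2)) => //.
rewrite /Rdiv Rmult_assoc Rinv_l; last lra.
by rewrite Rmult_1_l Rmult_1_r; apply: ln_le_ln; [lra | apply: Rmax_l].
Qed.

Lemma trunc_log_le_logP d : 0 < d -> Rle (INR (trunc_log 2 d)) (logP (INR d)).
Proof.
move=> d_gt0; have ln2_gt0 : Rlt 0 (ln 2) by have := ln_lt_2; lra.
rewrite /logP; apply: (Rmult_le_reg_r (ln 2)) => //.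
rewrite /Rdiv Rmult_assoc Rinv_l; last lra.
rewrite Rmult_1_r -ln_pow; last lra.
apply: ln_le_ln; first by apply: pow_lt; lra.
apply: Rle_trans (Rmax_r _ _); rewrite (_ : IZR 2 = INR 2) -?INR_expn; last by rewrite /=; lra.
by apply/le_INR/leP/trunc_logP.
Qed.

Lemma tour_const_le_logP d : 0 < d -> Rle (INR (3 * tour_const d)) (Rmult 108 (logP (INR d))).
Proof.
move=> d_gt0; have := trunc_log_le_logP d_gt0; have := logP_ge1 (INR d).
have -> : 3 * tour_const d = 36 * trunc_log 2 d + 72 by rewrite /tour_const; lia.
rewrite plus_INR mult_INR !INR_IZR_INZ /=; lra.
Qed.

Theorem theorem5 :
  exists c : R, Rlt (IZR 0) c /\
    forall (d n : nat) (X : seq nat),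
      2 <= d -> is_perm n X -> decomposable d X ->
      F1_le n X (Rmult (Rmult c (logP (INR d))) (INR (size X))).
Proof.
exists (IZR 108); split; first lra.
move=> d n X d_ge2 perm_X dec_X.
have [R [inorder_R tour_R]] := decomposable_within_budget dec_X perm_X.
have -> : size X = n by rewrite (perm_size perm_X) size_iota.
rewrite (perm_size perm_X) size_iota in inorder_R tour_R.
exists (Node Leaf 1 R), 1; split; first exact: inorder_R.
split; first by rewrite -inorder_R /= mem_head.
have cost_le : finger_cost (Node Leaf 1 R) 1 X <= 3 * tour_const d * n.
  by move: tour_R; rewrite /tour; lia.
apply: Rle_trans (le_INR _ _ (elimT leP cost_le)) _.
rewrite mult_INR; apply: Rmult_le_compat_r; first exact: pos_INR.
by apply: tour_const_le_logP; apply: ltnW.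
Qed.
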